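(* Let $m,n$ be positive integers and $\Lambda=(a_1,\dots,a_n|b_1,\dots,b_m)\in\mathbb Z^{n|m}$ be such that $a_1,\dots,a_n$ form a complete set of representatives modulo $n$ and $b_1,\dots,b_m$ form a complete set of representatives modulo $m$. Then every element of the orbit of $\Lambda$ under the Weyl groupoid action has the same property.
   Context: Elements of $\mathbb Z^{n|m}$ are identified with $\sum_ia_i\epsilon_i-\sum_jb_j\delta_j$. The Weyl groupoid action on $\mathbb Z^{n|m}$ is generated by the permutations of $a_1,\dots,a_n$ among themselves and of $b_1,\dots,b_m$ among themselves, and, for $\alpha=\epsilon_i-\delta_j$, by the bijections $\tau_\alpha:\Pi_\alpha\to\Pi_{-\alpha}$, $\Lambda\mapsto\Lambda+n\epsilon_i-m\delta_j$ (add $n$ to $a_i$, $m$ to $b_j$) and $\tau_{-\alpha}=\tau_\alpha^{-1}$, where $\Pi_\alpha=\{a_i=b_j\}$ and $\Pi_{-\alpha}=\{a_i-b_j=n-m\}$. The orbit of $\Lambda$ is the set of elements reachable from $\Lambda$ by finite sequences of these operations, each applied on its domain. *)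

From mathcomp Require Import all_boot all_order all_algebra all_fingroup.
Set Implicit Arguments. Unset Strict Implicit. Unset Printing Implicit Defensive.
Import Order.TTheory GRing.Theory Num.Theory.
Local Open Scope ring_scope.

(* An element (a_1..a_n | b_1..b_m) of Z^{n|m}, i.e.
   sum_i a_i eps_i - sum_j b_j delta_j. *)
Record wt (n m : nat) := Wt { wa : 'I_n -> int ; wb : 'I_m -> int }.

Inductive weyl_step (n m : nat) : wt n m -> wt n m -> Prop :=
| step_perm_a (a : 'I_n -> int) (b : 'I_m -> int) (s : 'S_n) :
    weyl_step (Wt a b) (Wt (fun i => a (s i)) b)
| step_perm_b (a : 'I_n -> int) (b : 'I_m -> int) (s : 'S_m) :
    weyl_step (Wt a b) (Wt a (fun j => b (s j)))
| step_tau (a : 'I_n -> int) (b : 'I_m -> int) (i : 'I_n) (j : 'I_m) :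
    (* tau_alpha, alpha = eps_i - delta_j, on Pi_alpha = {a_i = b_j} *)
    a i = b j ->
    weyl_step (Wt a b)
      (Wt (fun k => if k == i then a k + n%:Z else a k)
          (fun l => if l == j then b l + m%:Z else b l))
| step_tau_inv (a : 'I_n -> int) (b : 'I_m -> int) (i : 'I_n) (j : 'I_m) :
    (* tau_{-alpha} = tau_alpha^{-1}, on Pi_{-alpha} = {a_i - b_j = n - m} *)
    a i - b j = n%:Z - m%:Z ->
    weyl_step (Wt a b)
      (Wt (fun k => if k == i then a k - n%:Z else a k)
          (fun l => if l == j then b l - m%:Z else b l)).

Inductive weyl_orbit (n m : nat) (L : wt n m) : wt n m -> Prop :=
| orbit_refl : weyl_orbit L L
| orbit_step (M N : wt n m) : weyl_orbit L M -> weyl_step M N -> weyl_orbit L N.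

(* x_1..x_k form a complete set of representatives modulo k:
   the residues x_i mod k are pairwise distinct (hence exhaust Z/kZ). *)
Definition complete_residues (k : nat) (x : 'I_k -> int) : Prop :=
  forall i j : 'I_k, (x i = x j %[mod k%:Z])%Z -> i = j.

Definition weyl_good (n m : nat) (L : wt n m) : Prop :=
  complete_residues (wa L) /\ complete_residues (wb L).

From mathcomp Require Import all_boot all_order all_algebra all_fingroup.
Import GRing.Theory.
Local Open Scope ring_scope.

(* The permutations only reindex, and tau_{+-alpha} move a
   single a_i by +-n and a single b_j by +-m, which fixes every residue. *)

Lemma complete_residues_eqmod (k : nat) (x y : 'I_k -> int) :
  (forall i, (x i = y i %[mod k%:Z])%Z) ->
  complete_residues x -> complete_residues y.
Proof. by move=> xy cx i j yij; apply: cx; rewrite !xy. Qed.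

Lemma complete_residues_perm (k : nat) (x : 'I_k -> int) (s : 'S_k) :
  complete_residues x -> complete_residues (fun i => x (s i)).
Proof. by move=> cx i j /cx; apply: perm_inj. Qed.

Lemma complete_residues_shift (k : nat) (x : 'I_k -> int) (i0 : 'I_k) (d : int) :
  (k%:Z %| d)%Z -> complete_residues x ->
  complete_residues (fun i => if i == i0 then x i + d else x i).
Proof.
move=> kd; apply: complete_residues_eqmod => i; case: (i == i0) => //.
by rewrite -(divzK kd) addrC modzMDl.
Qed.

Lemma weyl_step_good (n m : nat) (L M : wt n m) :
  weyl_good L -> weyl_step L M -> weyl_good M.
Proof.
move=> gL st; case: st gL => [a b s|a b s|a b i j _|a b i j _] [/= cra crb];
  split => //=; try exact: complete_residues_perm.
all: by apply: complete_residues_shift => //; rewrite ?rpredN dvdzz.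
Qed.

Theorem lemma4p1 (n m : nat) (hn : (0 < n)%N) (hm : (0 < m)%N) (L M : wt n m) :
  weyl_good L -> weyl_orbit L M -> weyl_good M.
Proof. by move=> gL; elim=> // P N _ gP; apply: weyl_step_good. Qed.
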